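(* Let $\mathcal{A}$ be a $^*$-algebra with quadratic module $\mathcal{A}^+_{\mathrm H}$, let $\mathcal{J}\in\mathcal{A}_{\mathrm H}$, let $\mathcal{D}$ be a pre-Hilbert space and $\pi:\mathcal{A}\to\mathcal{L}^*(\mathcal{D})$ an injective $^*$-representation with $\mathcal{A}^+_{\mathrm H}=\pi^{-1}(\mathcal{L}^*(\mathcal{D})^+_{\mathrm H})$. For $\mu\in\mathbb{R}$ let $\mathcal{E}_\mu=\{\psi\in\mathcal{D}:\pi(\mathcal{J})\psi=\mu\psi\}$ and $\mathcal{E}_\mu^\perp$ its orthogonal complement in $\mathcal{D}$. Let $\mu\in\mathbb{R}$ and assume $\mathcal{D}=\mathcal{E}_\mu\oplus\mathcal{E}_\mu^\perp$ as vector spaces and that there is $\epsilon>0$ with $\langle\phi,\pi((\mathcal{J}-\mu\mathbb{1})^2)\phi\rangle\ge\epsilon\langle\phi,\phi\rangle$ for all $\phi\in\mathcal{E}_\mu^\perp$. Then $$(\mathcal{A}^{\mathfrak u_1})^+_{\mathrm H}+\big(\langle\mathcal{J}-\mu\rangle\big)_{\mathrm H}=\mathcal{R}_\mu=\{a\in(\mathcal{A}^{\mathfrak u_1})_{\mathrm H}:\langle\psi,\pi(a)\psi\rangle\ge0\text{ for all }\psi\in\mathcal{E}_\mu\},$$ and the reduced algebra $\mathcal{A}_{\mu\text{-red}}$ admits an injective $^*$-representation $\pi_{\mu\text{-red}}:\mathcal{A}_{\mu\text{-red}}\to\mathcal{L}^*(\mathcal{E}_\mu)$, given by $\pi_{\mu\text{-red}}([a]_\mu)\psi=\pi(a)\psi\in\mathcal{E}_\mu$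 for $\psi\in\mathcal{E}_\mu$, $a\in\mathcal{A}^{\mathfrak u_1}$, such that $(\mathcal{A}_{\mu\text{-red}})^+_{\mathrm H}=\pi_{\mu\text{-red}}^{-1}(\mathcal{L}^*(\mathcal{E}_\mu)^+_{\mathrm H})$.
   Context: A $^*$-algebra is a unital associative complex algebra with antilinear involution satisfying $(ab)^*=b^*a^*$; $\mathcal{A}_{\mathrm H}$ denotes its Hermitian elements. A quadratic module is a subset $Q\subseteq\mathcal{A}_{\mathrm H}$ with $Q+Q\subseteq Q$, $a^*Qa\subseteq Q$ for all $a$, and $\mathbb{1}\in Q$; its support is $\operatorname{supp}Q=Q\cap(-Q)$ and $\operatorname{supp}_{\mathbb C}Q=\operatorname{supp}Q+\mathrm{i}\operatorname{supp}Q$. Here $\mathcal{A}^+_{\mathrm H}$ is a quadratic module with $\operatorname{supp}\mathcal{A}^+_{\mathrm H}=\{0\}$. For a pre-Hilbert space $\mathcal{D}$, $\mathcal{L}^*(\mathcal{D})$ is the $^*$-algebra of adjointable linear endomorphisms and $\mathcal{L}^*(\mathcal{D})^+_{\mathrm H}=\{a\text{ Hermitian}:\langle\psi,a\psi\rangle\ge0\ \forall\psi\}$. $\mathcal{A}^{\mathfrak u_1}=\{a\in\mathcal{A}:a\mathcal{J}=\mathcal{J}a\}$ with $(\mathcal{A}^{\mathfrak u_1})^+_{\mathrm H}=\mathcal{A}^+_{\mathrm H}\cap\mathcal{A}^{\mathfrak u_1}$; $\langle\mathcal{J}-\mu\rangle$ is the $^*$-ideal of $\mathcal{A}^{\mathfrak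 u_1}$ generated by $\mathcal{J}-\mu\mathbb{1}$; for a set $S$, $S_{\mathrm H}=S\cap\mathcal{A}_{\mathrm H}$. A state on $\mathcal{A}^{\mathfrak u_1}$ is a linear functional $\omega$ with $\omega(\mathbb{1})=1$, real on Hermitian elements, nonnegative on $(\mathcal{A}^{\mathfrak u_1})^+_{\mathrm H}$; it is a $\mu$-eigenstate of $\mathcal{J}$ if $\omega((\mathcal{J}-\mu\mathbb{1})^*(\mathcal{J}-\mu\mathbb{1}))=0$. $\mathcal{R}_\mu=\{a\in(\mathcal{A}^{\mathfrak u_1})_{\mathrm H}:\omega(a)\ge0\text{ for all }\mu\text{-eigenstates }\omega\}$, $\mathcal{V}_\mu=\{a\in\mathcal{A}^{\mathfrak u_1}:\omega(a)=0\text{ for all }\mu\text{-eigenstates }\omega\}$. The reduced ordered $^*$-algebra is $\mathcal{A}_{\mu\text{-red}}=\mathcal{A}^{\mathfrak u_1}/\mathcal{V}_\mu$, $[\cdot]_\mu$ the quotient map, with positive cone $(\mathcal{A}_{\mu\text{-red}})^+_{\mathrm H}=\{[r]_\mu:r\in\mathcal{R}_\mu\}$. *)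

From mathcomp Require Import all_boot all_algebra.
From mathcomp Require Export complex.
From mathcomp Require Export reals.
Set Implicit Arguments.
Unset Strict Implicit.
Unset Printing Implicit Defensive.
Import GRing.Theory Num.Theory.
Local Open Scope ring_scope.

Section StarAlgebras.
Variable R : realType.
Local Notation C := (R[i]).

Definition rC (r : R) : C := (r%:C)%C.

Section Alg.
Variable A : algType C.
Variable star : A -> A.

Definition is_star_involution : Prop :=
  [/\ forall a, star (star a) = a,
      forall (z : C) (a b : A), star (z *: a + b) = z^* *: star a + star b &
      forall a b : A, star (a * b) = star b * star a].

Definition herm (a : A) : Prop := star a = a.

Definition is_quadratic_module (Q : A -> Prop) : Prop :=
  [/\ forall q, Q q -> herm q,
      forall p q, Q p -> Q q -> Q (p + q),
      forall a q, Q q -> Q (star a * q * a) & Q 1].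

Definition qm_support (Q : A -> Prop) (a : A) : Prop := Q a /\ Q (- a).

Definition rsc (mu : R) : A := (rC mu)%:A.

Definition u1 (J : A) (a : A) : Prop := a * J = J * a.

Definition is_star_ideal_u1 (J : A) (I : A -> Prop) : Prop :=
  [/\ forall a, I a -> u1 J a,
      I 0,
      forall (z : C) a b, I a -> I b -> I (z *: a + b),
      forall a b, u1 J a -> I b -> I (a * b) /\ I (b * a) &
      forall a, I a -> I (star a)].

Definition gen_star_ideal_u1 (J x : A) (a : A) : Prop :=
  forall I, is_star_ideal_u1 J I -> I x -> I a.

(* states on A^{u_1} (only their values on A^{u_1} matter) *)
Definition is_state_u1 (Apos : A -> Prop) (J : A) (omega : A -> C) : Prop :=
  [/\ forall (z : C) a b, u1 J a -> u1 J b -> omega (z *: a + b) = z * omega a + omega b,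
      omega 1 = 1,
      forall a, u1 J a -> herm a -> omega a \is Num.real &
      forall a, u1 J a -> Apos a -> 0 <= omega a].

Definition is_eigenstate (Apos : A -> Prop) (J : A) (mu : R) (omega : A -> C) : Prop :=
  is_state_u1 Apos J omega /\ omega (star (J - rsc mu) * (J - rsc mu)) = 0.

Definition Rmu (Apos : A -> Prop) (J : A) (mu : R) (a : A) : Prop :=
  [/\ u1 J a, herm a &
      forall omega, is_eigenstate Apos J mu omega -> 0 <= omega a].

Definition Vmu (Apos : A -> Prop) (J : A) (mu : R) (a : A) : Prop :=
  u1 J a /\ forall omega, is_eigenstate Apos J mu omega -> omega a = 0.

(* The reduced algebra A_{mu-red} = A^{u_1} / V_mu is handled through
   representatives a in A^{u_1}:  [a]_mu = [b]_mu  iff  a - b ∈ V_mu,  and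
   [a]_mu ∈ (A_{mu-red})^+_H  iff  exists r ∈ R_mu with [r]_mu = [a]_mu. *)
Definition red_eq (Apos : A -> Prop) (J : A) (mu : R) (a b : A) : Prop :=
  Vmu Apos J mu (a - b).

Definition red_pos (Apos : A -> Prop) (J : A) (mu : R) (a : A) : Prop :=
  exists r, Rmu Apos J mu r /\ red_eq Apos J mu r a.

End Alg.

Section PreHilbert.
Variable D : lmodType C.
Variable ip : D -> D -> C.   (* <psi, phi>, antilinear in psi, linear in phi *)

Definition is_inner_product : Prop :=
  [/\ forall psi (z : C) phi chi, ip psi (z *: phi + chi) = z * ip psi phi + ip psi chi,
      forall psi phi, ip phi psi = (ip psi phi)^*,
      forall psi, 0 <= ip psi psi &
      forall psi, ip psi psi = 0 -> psi = 0].

(* T is a positive Hermitian operator on the subspace S (for S the whole space: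
   T ∈ L^*(D)^+_H , given that T is adjointable) *)
Definition op_pos_on (S : D -> Prop) (T : D -> D) : Prop :=
  (forall psi phi, S psi -> S phi -> ip psi (T phi) = ip (T psi) phi) /\
  (forall psi, S psi -> 0 <= ip psi (T psi)).

Definition orth_compl (S : D -> Prop) (phi : D) : Prop :=
  forall psi, S psi -> ip psi phi = 0.

Variable A : algType C.
Variable star : A -> A.

(* pi : A -> L^*(D) is a (unital) *-representation: each pi a is linear,
   pi is linear and multiplicative, pi 1 = id, and pi (star a) is the adjoint
   of pi a (so each pi a is adjointable). *)
Definition is_star_rep (pi : A -> D -> D) : Prop :=
  [/\ forall a (z : C) psi phi, pi a (z *: psi + phi) = z *: pi a psi + pi a phi,
      forall (z : C) a b psi, pi (z *: a + b) psi = z *: pi a psi + pi b psi,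
      forall a b psi, pi (a * b) psi = pi a (pi b psi),
      forall psi, pi 1 psi = psi &
      forall a psi phi, ip psi (pi a phi) = ip (pi (star a) psi) phi].

Definition rep_injective (pi : A -> D -> D) : Prop :=
  forall a b, (forall psi, pi a psi = pi b psi) -> a = b.

Definition eigsp (pi : A -> D -> D) (J : A) (mu : R) (psi : D) : Prop :=
  pi J psi = rC mu *: psi.

End PreHilbert.

End StarAlgebras.

(* A vector state  x |-> <psi, pi(x) psi> / <psi, psi>  with psi in E_mu is a mu-eigenstate, and a
   Cauchy-Schwarz argument shows that every mu-eigenstate vanishes on the *-ideal generated by
   J - mu.  This gives  (A^{u1})^+_H + <J - mu>_H  ⊆  R_mu  ⊆  {a : pi(a) >= 0 on E_mu}.
   Conversely, let pi(a) >= 0 on E_mu, put b = a - 1/4 and q = - eps^-1 b (J - mu)^2 b, an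
   element of the ideal.  Then pi(q) vanishes on E_mu, while for phi in E_mu^perp the gap
   estimate applied to pi(b) phi gives
     <phi, pi(a - q) phi> >= <phi, pi(a) phi> + |pi(b) phi|^2 = |pi(a) phi + phi/4|^2,
   so a - q is positive because both summands of D = E_mu ⊕ E_mu^perp are pi(a - q)-invariant.
   Finally a is in V_mu iff pi(a) vanishes on E_mu: vector states and polarization give one
   direction; for the other, the Hermitian parts h of a satisfy h, -h in R_mu by the first part.
   The reduced positive cone is then described using the representative (a + a^* ) / 2. *)

From HB Require Import structures.
From mathcomp Require Import all_boot all_order all_algebra.
From mathcomp Require Import complex reals ring.
Import Order.TTheory GRing.Theory Num.Theory.
Local Open Scope ring_scope.
Set Implicit Arguments.
Unset Strict Implicit.
Unset Printing Implicit Defensive.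

Section ReducedRepresentation.
Variables (R : realType) (A : algType R[i]) (star : A -> A).
Hypothesis star_invol : is_star_involution star.

Lemma starK : involutive star. Proof. by case: star_invol. Qed.
Lemma starM a b : star (a * b) = star b * star a. Proof. by case: star_invol. Qed.
Fact star_is_semilinear : linear_for (Num.conj \; *:%R) star.
Proof. by case: star_invol. Qed.
HB.instance Definition _ := GRing.isLinear.Build R[i] A A _ star star_is_semilinear.

Lemma starZ z a : star (z *: a) = z^* *: star a. Proof. exact: linearZ. Qed.
Lemma star1 : star 1 = 1.
Proof. by have := starM (star 1) 1; rewrite mulr1 starK mulr1 => <-. Qed.
Lemma star_scalar z : star z%:A = z^*%:A. Proof. by rewrite starZ star1. Qed.
Lemma conj_rC (r : R) : (rC r)^* = rC r. Proof. exact: conjc_real. Qed.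
Lemma star_rsc (r : R) : star (rsc A r) = rsc A r.
Proof. by rewrite star_scalar conj_rC. Qed.

Variable J : A.
Hypothesis herm_J : herm star J.
Local Notation u := (u1 J).

Lemma herm_add_star a : herm star (a + star a).
Proof. by rewrite /herm linearD /= starK addrC. Qed.
Lemma herm_i_sub_star a : herm star ('i *: (a - star a)).
Proof. by rewrite /herm starZ linearB /= starK conjCi scaleNr -scalerN opprB. Qed.

Lemma u1_J : u J. Proof. by []. Qed.
Lemma u1_0 : u 0. Proof. by rewrite /u1 mul0r mulr0. Qed.
Lemma u1_1 : u 1. Proof. by rewrite /u1 mul1r mulr1. Qed.
Lemma u1_scalar z : u z%:A. Proof. by rewrite /u1 mulr_algl mulr_algr. Qed.
Lemma u1D a b : u a -> u b -> u (a + b).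
Proof. by rewrite /u1 => ha hb; rewrite mulrDl mulrDr ha hb. Qed.
Lemma u1N a : u a -> u (- a). Proof. by rewrite /u1 mulNr mulrN => ->. Qed.
Lemma u1Z z a : u a -> u (z *: a).
Proof. by rewrite /u1 -scalerAl -scalerAr => ->. Qed.
Lemma u1M a b : u a -> u b -> u (a * b).
Proof. by rewrite /u1 => ha hb; rewrite -mulrA hb !mulrA ha. Qed.
Lemma u1X a n : u a -> u (a ^+ n).
Proof. by move=> ha; elim: n => [|n IHn]; [exact: u1_1 | rewrite exprS; exact: u1M]. Qed.
Lemma u1_star a : u a -> u (star a).
Proof. by rewrite /u1 => ha; rewrite -{1}herm_J -starM -ha starM herm_J. Qed.

Lemma herm_shift (mu : R) : herm star (J - rsc A mu).
Proof. by rewrite /herm linearB /= herm_J star_rsc. Qed.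
Lemma u1_shift (mu : R) : u (J - rsc A mu).
Proof. exact/u1D/u1N/u1_scalar. Qed.
Lemma u1_shift_comm (mu : R) a : u a -> a * (J - rsc A mu) = (J - rsc A mu) * a.
Proof. by move=> ha; rewrite /rsc mulrBr mulrBl ha mulr_algl mulr_algr. Qed.

#[local] Hint Resolve u1_J u1_0 u1_1 u1_scalar u1_shift u1D u1N u1Z u1M u1X u1_star : u1.
Local Ltac u1_auto := auto 10 with u1.

Lemma u1_gen_star_ideal x q : u x -> gen_star_ideal_u1 star J x q -> u q.
Proof.
move=> ux; apply=> //; split=> //; first by u1_auto.
- by move=> z a b ua ub; u1_auto.
- by move=> a b ua ub; split; u1_auto.
- by move=> a ua; u1_auto.
Qed.

Lemma gen_star_ideal_u1_mul x a b z : u a -> u b ->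
  gen_star_ideal_u1 star J x (z *: (a * x * b)).
Proof.
move=> ua ub I [_ I0 I_lin I_mul _] Ix.
by rewrite -[_ *: _]addr0; apply: I_lin => //; exact: (I_mul _ _ ub (I_mul _ _ ua Ix).1).2.
Qed.

Variable Apos : A -> Prop.
Hypothesis Apos_qm : is_quadratic_module star Apos.

(** * States on the commutant *)

Section State.
Variable om : A -> R[i].
Hypothesis om_state : is_state_u1 star Apos J om.

Lemma omZD z a b : u a -> u b -> om (z *: a + b) = z * om a + om b.
Proof. by case: om_state => h _ _ _; apply: h. Qed.
Lemma om_real a : u a -> herm star a -> om a \is Num.real.
Proof. by case: om_state => _ _ h _; apply: h. Qed.
Lemma om_ge0 a : u a -> Apos a -> 0 <= om a.
Proof. by case: om_state => _ _ _ h; apply: h. Qed.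

Lemma omD a b : u a -> u b -> om (a + b) = om a + om b.
Proof. by move=> ha hb; rewrite -{1}[a]scale1r omZD // mul1r. Qed.
Lemma om0 : om 0 = 0.
Proof. by apply/(addrI (om 0)); rewrite -omD ?addr0 //; exact: u1_0. Qed.
Lemma omZ z a : u a -> om (z *: a) = z * om a.
Proof. by move=> ha; rewrite -[z *: a]addr0 omZD ?om0 ?addr0 //; exact: u1_0. Qed.
Lemma omN a : u a -> om (- a) = - om a.
Proof. by move=> ha; rewrite -scaleN1r omZ // mulN1r. Qed.

Lemma om_sq_ge0 x : u x -> 0 <= om (star x * x).
Proof.
case: Apos_qm => _ _ Apos_conj Apos1 ux.
by apply: om_ge0; [u1_auto | have := Apos_conj x 1 Apos1; rewrite mulr1].
Qed.

Lemma eq_conjC_of_real (p q : R[i]) :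
  p + q \is Num.real -> 'i * (p - q) \is Num.real -> q = p^*.
Proof.
move=> /conj_Creal e1 /conj_Creal e2.
rewrite rmorphD /= in e1; rewrite rmorphM rmorphB /= conjCi in e2.
have {}e2 : p^* - q^* = q - p.
  by have := congr1 ( *%R 'i) e2; rewrite !mulrA mulrN mulCii opprK !mul1r mulN1r opprB.
have : (2 : R[i]) * (q - p^*) = (p + q - (p^* + q^*)) - (p^* - q^* - (q - p)) by ring.
by rewrite e1 e2 !subrr => /eqP; rewrite mulf_eq0 pnatr_eq0 subr_eq0 => /eqP.
Qed.

Lemma om_star x : u x -> om (star x) = (om x)^*.
Proof.
move=> ux; have usx : u (star x) by u1_auto.
have uNsx : u (- star x) by u1_auto.
have re_x := om_real (u1D ux usx) (herm_add_star x).
have im_x := om_real (u1Z 'i (u1D ux uNsx)) (herm_i_sub_star x).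
rewrite omD // in re_x; rewrite omZ ?omD ?omN // in im_x; last by u1_auto.
exact: eq_conjC_of_real re_x im_x.
Qed.

Lemma conj_quadratic_ge0_eq0 (m c : R[i]) : 0 <= m ->
  (forall s, 0 <= s^* * s * m + (s^* * c + s * c^*)) -> c = 0.
Proof.
move=> m_ge0 /(_ (- c / (m + 1))).
have m1_gt0 : 0 < m + 1 by rewrite ltr_wpDl.
have m2_gt0 : 0 < m + 2 by rewrite ltr_wpDl.
rewrite rmorphM rmorphN fmorphV rmorphD rmorph1 /= (conj_Creal (ger0_real m_ge0)).
have -> : (- c^* / (m + 1)) * (- c / (m + 1)) * m + (- c^* / (m + 1) * c + - c / (m + 1) * c^*)
          = - (`|c| ^+ 2 * (m + 2) / (m + 1) ^+ 2) by rewrite normCK; field; rewrite gt_eqF.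
rewrite oppr_ge0 pmulr_lle0 ?invr_gt0 ?exprn_gt0 // (pmulr_lle0 _ m2_gt0) => c2_le0.
by apply/eqP; rewrite -normr_eq0 -sqrf_eq0 eq_le c2_le0 exprn_ge0.
Qed.

Lemma om_mul_eq0 x y : u x -> u y -> om (star y * y) = 0 -> om (x * y) = 0.
Proof.
move=> ux uy yy0.
have := om_sq_ge0 (u1_star ux); rewrite starK => xx_ge0.
apply: (conj_quadratic_ge0_eq0 xx_ge0) => s.
have uz : u (s *: star x + y) by u1_auto.
rewrite -om_star -?omZ -?omD; u1_auto.
have := om_sq_ge0 uz.
rewrite linearD linearZ /= starK mulrDl !mulrDr -!scalerAl -!scalerAr scalerA -starM.
by rewrite !addrA omD ?yy0 ?addr0 //; u1_auto.
Qed.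

Lemma om_gen_star_ideal_eq0 x0 q : u x0 -> (forall a, u a -> a * x0 = x0 * a) ->
  om (star x0 * x0) = 0 -> gen_star_ideal_u1 star J x0 q -> om q = 0.
Proof.
move=> ux0 x0_central x0x0 q_gen.
pose I x := u x /\ forall y z, u y -> u z -> om (y * x * z) = 0.
have I_ideal : is_star_ideal_u1 star J I.
  split=> [a [] // | | z a b [ua Ia] [ub Ib] | a b ua [ub Ib] | a [ua Ia]].
  - by split=> [|y z _ _]; rewrite ?mulr0 ?mul0r ?om0 //; u1_auto.
  - split=> [|y w uy uw]; first by u1_auto.
    by rewrite mulrDr mulrDl -scalerAr -scalerAl omZD ?Ia ?Ib ?mulr0 ?addr0 //; u1_auto.
  - split; split=> [|y z uy uz]; try u1_auto.
      by rewrite mulrA Ib //; u1_auto.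
    by rewrite -!mulrA mulrA Ib //; u1_auto.
  - split=> [|y z uy uz]; first by u1_auto.
    have -> : y * star a * z = star (star z * a * star y) by rewrite !starM !starK mulrA.
    by rewrite om_star ?Ia ?rmorph0 //; u1_auto.
have I_x0 : I x0.
  split=> // y z uy uz.
  by rewrite -mulrA -x0_central // mulrA om_mul_eq0 //; u1_auto.
have [_ Iq] := q_gen I I_ideal I_x0.
by have := Iq 1 1; rewrite mul1r mulr1; apply; u1_auto.
Qed.

End State.

(** * The representation and the eigenspace E_mu *)

Variables (D : lmodType R[i]) (ip : D -> D -> R[i]).
Hypothesis ip_inner : is_inner_product ip.

Fact ip_linear psi : linear_for *%R (ip psi).
Proof. by case: ip_inner => ip_lin _ _ _ z phi chi; apply: ip_lin. Qed.
HB.instance Definition _ psi := GRing.isLinear.Build R[i] D R[i] *%R (ip psi) (ip_linear psi).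

Lemma ipC psi phi : ip phi psi = (ip psi phi)^*. Proof. by case: ip_inner. Qed.
Lemma ipnorm_ge0 psi : 0 <= ip psi psi. Proof. by case: ip_inner. Qed.
Lemma ipnorm_eq0 psi : ip psi psi = 0 -> psi = 0.
Proof. by case: ip_inner => _ _ _ h /h. Qed.

Lemma ipZr psi z phi : ip psi (z *: phi) = z * ip psi phi. Proof. exact: linearZ. Qed.

Lemma ipDl phi psi chi : ip (psi + chi) phi = ip psi phi + ip chi phi.
Proof. by rewrite ipC linearD rmorphD /= -!ipC. Qed.
Lemma ipZl phi z psi : ip (z *: psi) phi = z^* * ip psi phi.
Proof. by rewrite ipC linearZ rmorphM /= -ipC. Qed.
Lemma ipNl phi psi : ip (- psi) phi = - ip psi phi.
Proof. by rewrite -scaleN1r ipZl rmorphN1 mulN1r. Qed.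
Lemma ip0l phi : ip 0 phi = 0.
Proof. by rewrite -(scale0r 0) ipZl rmorph0 mul0r. Qed.

Lemma ip_polarization (S : D -> Prop) (T : {linear D -> D}) :
    (forall x y, S x -> S y -> S (x + y)) -> (forall z x, S x -> S (z *: x)) ->
    (forall x, S x -> ip x (T x) = 0) ->
  forall x y, S x -> S y -> ip x (T y) = 0.
Proof.
move=> SD SZ T0 x y Sx Sy.
have e1 := T0 _ (SD _ _ Sx Sy); have e2 := T0 _ (SD _ _ Sx (SZ 'i _ Sy)).
rewrite linearD !ipDl !linearD /= !T0 // addr0 add0r in e1.
rewrite linearD linearZ /= !ipDl !ipZl !linearD !linearZ /= !T0 // conjCi in e2.
rewrite !(mulr0, addr0, add0r) in e2.
have : 2 * 'i * ip x (T y) = 'i * (ip x (T y) + ip y (T x)) + ('i * ip x (T y) + - 'i * ip y (T x)).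
  by ring.
rewrite e1 e2 mulr0 addr0 => /eqP.
by rewrite !mulf_eq0 pnatr_eq0 (negbTE (neq0Ci _)) => /eqP.
Qed.

Lemma ip_quarter_identity phi v : ip v phi = ip phi v ->
  ip phi v + ip (v - 4^-1 *: phi) (v - 4^-1 *: phi) = ip (v + 4^-1 *: phi) (v + 4^-1 *: phi).
Proof.
move=> sym_v; have c_real : (4^-1 : R[i])^* = 4^-1 by rewrite conj_Creal // realV realn.
rewrite !ipDl !ipNl !ipZl !linearD !linearN /= !ipZr sym_v c_real.
by field.
Qed.

Variable pi : A -> D -> D.
Hypothesis pi_rep : is_star_rep ip star pi.

Fact pi_linear a : linear (pi a).
Proof. by case: pi_rep => pi_lin _ _ _ _ z psi phi; apply: pi_lin. Qed.
HB.instance Definition _ a := GRing.isLinear.Build R[i] D D *:%R (pi a) (pi_linear a).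

Lemma piZD z a b psi : pi (z *: a + b) psi = z *: pi a psi + pi b psi.
Proof. by case: pi_rep. Qed.
Lemma piM a b psi : pi (a * b) psi = pi a (pi b psi). Proof. by case: pi_rep. Qed.
Lemma pi1 psi : pi 1 psi = psi. Proof. by case: pi_rep. Qed.
Lemma pi_adj a psi phi : ip psi (pi a phi) = ip (pi (star a) psi) phi.
Proof. by case: pi_rep. Qed.

Lemma piD a b psi : pi (a + b) psi = pi a psi + pi b psi.
Proof. by rewrite -{1}[a]scale1r piZD scale1r. Qed.
Lemma pi0 psi : pi 0 psi = 0.
Proof. by apply/(addrI (pi 0 psi)); rewrite -piD !addr0. Qed.
Lemma piZ z a psi : pi (z *: a) psi = z *: pi a psi.
Proof. by rewrite -[z *: a]addr0 piZD pi0 addr0. Qed.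
Lemma piN a psi : pi (- a) psi = - pi a psi.
Proof. by rewrite -(scaleN1r a) piZ scaleN1r. Qed.
Lemma piB a b psi : pi (a - b) psi = pi a psi - pi b psi.
Proof. by rewrite piD piN. Qed.
Lemma pi_scalar z psi : pi z%:A psi = z *: psi.
Proof. by rewrite piZ pi1. Qed.

Variable mu : R.
Local Notation K := (J - rsc A mu).
Local Notation E := (eigsp pi J mu).
Local Notation Ep := (orth_compl ip (eigsp pi J mu)).

Lemma eigspD psi phi : E psi -> E phi -> E (psi + phi).
Proof. by rewrite /eigsp linearD /= scalerDr => -> ->. Qed.
Lemma eigspZ z psi : E psi -> E (z *: psi).
Proof. by rewrite /eigsp linearZ /= => ->; rewrite !scalerA mulrC. Qed.
Lemma eigsp_pi a psi : u a -> E psi -> E (pi a psi).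
Proof. by rewrite /eigsp /u1 => ua Epsi; rewrite -piM -ua piM Epsi linearZ. Qed.
Lemma orth_eigsp_pi a phi : u a -> Ep phi -> Ep (pi a phi).
Proof. by move=> ua Ep_phi psi Epsi; rewrite pi_adj Ep_phi //; apply: eigsp_pi => //; u1_auto. Qed.
Lemma pi_shift_eigsp psi : E psi -> pi K psi = 0.
Proof. by rewrite /eigsp piB pi_scalar => ->; rewrite subrr. Qed.

Lemma ip_pi_split a psi phi : u a -> E psi -> Ep phi ->
  ip (psi + phi) (pi a (psi + phi)) = ip psi (pi a psi) + ip phi (pi a phi).
Proof.
move=> ua Epsi Ep_phi; rewrite linearD ipDl !linearD /=.
rewrite (orth_eigsp_pi ua Ep_phi Epsi) (ipC (pi a psi) phi) (Ep_phi _ (eigsp_pi ua Epsi)).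
by rewrite rmorph0 addr0 add0r.
Qed.

(** * Eigenstates and R_mu *)

Hypothesis Apos_pi : forall a, Apos a <-> op_pos_on ip (fun _ => True) (pi a).

Lemma ip_pi_real a psi : herm star a -> ip psi (pi a psi) \is Num.real.
Proof. by move=> ha; rewrite CrealE -ipC pi_adj ha. Qed.

Lemma vector_state_eigenstate psi : E psi -> ip psi psi != 0 ->
  is_eigenstate star Apos J mu (fun x => ip psi (pi x psi) / ip psi psi).
Proof.
move=> Epsi psi_neq0; split; first split.
- by move=> z a b _ _; rewrite piZD ip_linear mulrDl mulrA.
- by rewrite pi1 divff.
- by move=> a _ ha; rewrite realM ?realV ?ip_pi_real ?ger0_real ?ipnorm_ge0.
- by move=> a _ /Apos_pi [_ pos_a]; rewrite divr_ge0 ?pos_a ?ipnorm_ge0.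
- by rewrite piM pi_shift_eigsp // linear0 /= linear0 mul0r.
Qed.

Lemma eigenstate_gen_star_ideal_eq0 om q : is_eigenstate star Apos J mu om ->
  gen_star_ideal_u1 star J K q -> om q = 0.
Proof.
case=> om_state omKK; apply: (om_gen_star_ideal_eq0 om_state) => //.
  exact: u1_shift.
exact: u1_shift_comm.
Qed.

Local Notation decomposable a := (exists p q, [/\ u p /\ Apos p,
  gen_star_ideal_u1 star J K q /\ herm star q & a = p + q]).

Lemma Rmu_decomposable a : decomposable a -> Rmu star Apos J mu a.
Proof.
case=> p [q [[up Apos_p] [q_gen herm_q] ->]].
have uq : u q by apply: u1_gen_star_ideal q_gen; u1_auto.
split; first by u1_auto.
  by case: Apos_qm => Apos_herm _ _ _; rewrite /herm linearD /= herm_q Apos_herm.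
move=> om om_eigen; have [om_state _] := om_eigen.
by rewrite omD // (eigenstate_gen_star_ideal_eq0 om_eigen q_gen) addr0 (om_ge0 om_state).
Qed.

Lemma Rmu_pos_on_eigsp a : Rmu star Apos J mu a ->
  [/\ u a, herm star a & forall psi, E psi -> 0 <= ip psi (pi a psi)].
Proof.
case=> ua herm_a Rmu_a; split=> // psi Epsi.
have [psi0|psi_neq0] := eqVneq (ip psi psi) 0.
  by rewrite (ipnorm_eq0 psi0) linear0 ipnorm_ge0.
have := Rmu_a _ (vector_state_eigenstate Epsi psi_neq0).
by rewrite pmulr_lge0 // invr_gt0 lt0r psi_neq0 ipnorm_ge0.
Qed.

Hypothesis eigsp_decomposition : forall psi, exists psi0 phi,
  [/\ E psi0, Ep phi & psi = psi0 + phi].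
Variable eps : R.
Hypothesis eps_gt0 : 0 < eps.
Hypothesis shift_sq_bound : forall phi, Ep phi ->
  rC eps * ip phi phi <= ip phi (pi (K ^+ 2) phi).

Section Decomposition.
Variable a : A.
Hypotheses (ua : u a) (herm_a : herm star a).
Hypothesis a_pos : forall psi, E psi -> 0 <= ip psi (pi a psi).

Let b := a - (4^-1 : R[i])%:A.
Let q := - (rC eps)^-1 *: (b * K ^+ 2 * b).

Let ub : u b. Proof. by rewrite /b; u1_auto. Qed.
Let uq : u q. Proof. by rewrite /q; u1_auto. Qed.
Let herm_b : herm star b.
Proof. by rewrite /herm linearB /= herm_a star_scalar conj_Creal // realV realn. Qed.
Let herm_q : herm star q.
Proof.
rewrite /herm linearZ /= !starM herm_b herm_shift -expr2 mulrA.
by rewrite rmorphN fmorphV /= conj_rC.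
Qed.

Let pi_q_eigsp psi : E psi -> pi q psi = 0.
Proof.
move=> Epsi; rewrite /q piZ !piM (pi_shift_eigsp (eigsp_pi ub Epsi)).
by rewrite !linear0.
Qed.

Let orth_form_ge0 phi : Ep phi -> 0 <= ip phi (pi (a - q) phi).
Proof.
move=> Ep_phi; set v := pi a phi; set phi' := pi b phi.
have v_sym : ip v phi = ip phi v by rewrite [RHS]pi_adj herm_a.
have phi'E : phi' = v - 4^-1 *: phi by rewrite /phi' /b piB pi_scalar.
have eps_C_gt0 : 0 < rC eps by rewrite /rC ltcR.
have bound : rC eps * ip phi' phi' <= ip phi' (pi (K ^+ 2) phi').
  exact: shift_sq_bound (orth_eigsp_pi ub Ep_phi).
rewrite piB linearB /= /q piZ ipZr (piM (b * _)) piM [ip phi (pi b _)]pi_adj herm_b -/phi' mulNr opprK.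
apply: le_trans (ipnorm_ge0 (v + 4^-1 *: phi)) _.
by rewrite -ip_quarter_identity // -phi'E lerD2l ler_pdivlMl.
Qed.

Let Apos_sub_q : Apos (a - q).
Proof.
apply/Apos_pi; split=> [psi phi _ _ | chi _].
  by rewrite pi_adj linearB /= herm_a herm_q.
have [psi [phi [Epsi Ep_phi ->]]] := eigsp_decomposition chi.
rewrite ip_pi_split //; last by u1_auto.
apply: addr_ge0; last exact: orth_form_ge0.
by rewrite piB pi_q_eigsp // subr0 a_pos.
Qed.

Lemma pos_on_eigsp_decomposable : decomposable a.
Proof.
exists (a - q), q; split=> [||]; last by rewrite subrK.
- by split; [u1_auto | exact: Apos_sub_q].
- by split=> //; rewrite /q expr2 mulrA; apply: gen_star_ideal_u1_mul; u1_auto.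
Qed.

End Decomposition.

Lemma Rmu_of_pos_on_eigsp a : u a -> herm star a ->
  (forall psi, E psi -> 0 <= ip psi (pi a psi)) -> Rmu star Apos J mu a.
Proof. by move=> ua herm_a a_pos; apply/Rmu_decomposable/pos_on_eigsp_decomposable. Qed.

Lemma Rmu_characterization a :
  (decomposable a <-> Rmu star Apos J mu a) /\
  (Rmu star Apos J mu a <->
     [/\ u a, herm star a & forall psi, E psi -> 0 <= ip psi (pi a psi)]).
Proof.
split; split.
- exact: Rmu_decomposable.
- by case/Rmu_pos_on_eigsp; exact: pos_on_eigsp_decomposable.
- exact: Rmu_pos_on_eigsp.
- by case; exact: Rmu_of_pos_on_eigsp.
Qed.

(** * The reduced algebra *)

Lemma eigenstate_eq0_of_vanishing x : u x -> herm star x ->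
    (forall psi, E psi -> pi x psi = 0) ->
  forall om, is_eigenstate star Apos J mu om -> om x = 0.
Proof.
move=> ux herm_x x_E om om_eigen; have [om_state _] := om_eigen.
have Rmu_x : Rmu star Apos J mu x.
  by apply: Rmu_of_pos_on_eigsp => // psi Epsi; rewrite x_E // linear0.
have Rmu_Nx : Rmu star Apos J mu (- x).
  apply: Rmu_of_pos_on_eigsp => [||psi Epsi]; first by u1_auto.
    by rewrite /herm linearN /= herm_x.
  by rewrite piN x_E // oppr0 linear0.
case: Rmu_x Rmu_Nx => _ _ /(_ om om_eigen) x_ge0 [_ _ /(_ om om_eigen)].
by rewrite omN // oppr_ge0 => x_le0; apply: le_anti; rewrite x_le0 x_ge0.
Qed.

Lemma pi_star_eq0_on_eigsp c : u c -> (forall psi, E psi -> pi c psi = 0) ->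
  forall psi, E psi -> pi (star c) psi = 0.
Proof.
move=> uc c_E psi Epsi; set v := pi (star c) psi.
have Ev : E v by apply: eigsp_pi; u1_auto.
by apply: ipnorm_eq0; rewrite {2}/v pi_adj starK c_E // ip0l.
Qed.

Lemma Vmu_iff_eigsp c : u c ->
  (Vmu star Apos J mu c <-> forall psi, E psi -> pi c psi = 0).
Proof.
move=> uc; split=> [[_ c_V] | c_E].
  have c_form psi : E psi -> ip psi (pi c psi) = 0.
    move=> Epsi; have [psi0|psi_neq0] := eqVneq (ip psi psi) 0.
      by rewrite (ipnorm_eq0 psi0) !linear0.
    have /eqP := c_V _ (vector_state_eigenstate Epsi psi_neq0).
    by rewrite mulf_eq0 invr_eq0 (negbTE psi_neq0) orbF => /eqP.
  move=> psi Epsi; apply: ipnorm_eq0.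
  apply: (ip_polarization (S := E)) => //; [exact: eigspD | exact: eigspZ | exact: eigsp_pi].
split=> // om om_eigen; have [om_state _] := om_eigen.
have c_star_E := pi_star_eq0_on_eigsp uc c_E.
have re_c : om (c + star c) = 0.
  apply: eigenstate_eq0_of_vanishing => //; first by u1_auto.
    exact: herm_add_star.
  by move=> psi Epsi; rewrite piD c_E // c_star_E // addr0.
have im_c : om ('i *: (c - star c)) = 0.
  apply: eigenstate_eq0_of_vanishing => //; first by u1_auto.
    exact: herm_i_sub_star.
  by move=> psi Epsi; rewrite piZ piB c_E // c_star_E // subrr scaler0.
have : (- 'i) *: ('i *: (c - star c)) + (c + star c) = 2 *: c.
  by rewrite scalerA mulNr mulCii opprK scale1r addrACA addNr addr0 scaler_nat mulr2n.
move/(congr1 om); rewrite omZD ?re_c ?im_c ?mulr0 ?addr0 ?omZ //; try by u1_auto.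
by move/eqP; rewrite eq_sym mulf_eq0 pnatr_eq0 => /eqP.
Qed.

Lemma red_eq_iff_eigsp a b : u a -> u b ->
  (red_eq star Apos J mu a b <-> forall psi, E psi -> pi a psi = pi b psi).
Proof.
move=> ua ub; apply: iff_trans (Vmu_iff_eigsp _) _; first by u1_auto.
split=> ab_E psi /ab_E; rewrite piB; last by move->; rewrite subrr.
by move/eqP; rewrite subr_eq0 => /eqP.
Qed.

Lemma pi_star_on_eigsp a : u a ->
    (forall psi phi, E psi -> E phi -> ip psi (pi a phi) = ip (pi a psi) phi) ->
  forall psi, E psi -> pi (star a) psi = pi a psi.
Proof.
move=> ua a_sym psi Epsi; apply/eqP; rewrite -subr_eq0; apply/eqP; apply: ipnorm_eq0.
set v := pi (star a) psi - pi a psi.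
have Ev : E v by rewrite /v -piB; apply: eigsp_pi; u1_auto.
by rewrite {2}/v linearB /= [ip v (pi (star a) _)]pi_adj starK a_sym // subrr.
Qed.

Lemma red_pos_iff_eigsp a : u a ->
  (red_pos star Apos J mu a <-> op_pos_on ip E (pi a)).
Proof.
move=> ua; split=> [[r [Rmu_r r_a]] | [a_sym a_pos]].
  have [ur herm_r r_pos] := Rmu_pos_on_eigsp Rmu_r.
  have r_aE := (red_eq_iff_eigsp ur ua).1 r_a.
  split=> [psi phi Epsi Ephi | psi Epsi]; rewrite -!r_aE //; last exact: r_pos.
  by rewrite pi_adj herm_r.
have a_star_E := pi_star_on_eigsp ua a_sym.
pose r := 2^-1 *: (a + star a).
have ur : u r by rewrite /r; u1_auto.
have r_aE psi : E psi -> pi r psi = pi a psi.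
  move=> Epsi; rewrite piZ piD a_star_E // -mulr2n -scalerMnr scalerMnl -mulr_natr.
  by rewrite mulVf ?pnatr_eq0 // scale1r.
exists r; split; last exact/(red_eq_iff_eigsp ur ua).
apply: Rmu_of_pos_on_eigsp => // [|psi Epsi].
  by rewrite /herm /r starZ herm_add_star conj_Creal // realV realn.
by rewrite r_aE // a_pos.
Qed.

End ReducedRepresentation.

Theorem proposition3p1
  (R : realType) (A : algType R[i]) (star : A -> A) (Apos : A -> Prop) (J : A)
  (D : lmodType R[i]) (ip : D -> D -> R[i]) (pi : A -> D -> D) (mu : R) :
  is_star_involution star ->
  is_quadratic_module star Apos ->
  (forall a, qm_support Apos a <-> a = 0) ->
  herm star J ->
  is_inner_product ip ->
  is_star_rep ip star pi ->
  rep_injective pi ->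
  (forall a, Apos a <-> op_pos_on ip (fun _ => True) (pi a)) ->
  (* D = E_mu ⊕ E_mu^⊥ *)
  (forall psi, exists psi0 phi,
      [/\ eigsp pi J mu psi0, orth_compl ip (eigsp pi J mu) phi & psi = psi0 + phi]) ->
  (exists eps : R, 0 < eps /\
     forall phi, orth_compl ip (eigsp pi J mu) phi ->
       rC eps * ip phi phi <= ip phi (pi ((J - rsc A mu) ^+ 2) phi)) ->
  (* (A^{u1})^+_H + (<J - mu>)_H = R_mu = {a ∈ (A^{u1})_H : <psi, pi(a) psi> >= 0 on E_mu} *)
  (forall a,
     ((exists p q, [/\ u1 J p /\ Apos p,
                       gen_star_ideal_u1 star J (J - rsc A mu) q /\ herm star q
                     & a = p + q])
        <-> Rmu star Apos J mu a) /\
     (Rmu star Apos J mu a <->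
        [/\ u1 J a, herm star a &
            forall psi, eigsp pi J mu psi -> 0 <= ip psi (pi a psi)])) /\
  (* pi_{mu-red}([a]_mu) := pi(a) restricted to E_mu is an injective *-representation
     of A_{mu-red} on E_mu with (A_{mu-red})^+_H = pi_{mu-red}^{-1}(L^*(E_mu)^+_H) *)
  [/\ (* pi(a) maps E_mu into E_mu, so pi_{mu-red}([a]_mu) ∈ L(E_mu) *)
      forall a psi, u1 J a -> eigsp pi J mu psi -> eigsp pi J mu (pi a psi),
      (* well defined on classes and injective *)
      forall a b, u1 J a -> u1 J b ->
        (red_eq star Apos J mu a b <->
           forall psi, eigsp pi J mu psi -> pi a psi = pi b psi),
      (* *-representation properties on E_mu *)
      [/\ forall (z : R[i]) a b psi, u1 J a -> u1 J b -> eigsp pi J mu psi ->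
            pi (z *: a + b) psi = z *: pi a psi + pi b psi,
          forall a b psi, u1 J a -> u1 J b -> eigsp pi J mu psi ->
            pi (a * b) psi = pi a (pi b psi),
          forall psi, eigsp pi J mu psi -> pi 1 psi = psi &
          forall a psi phi, u1 J a -> eigsp pi J mu psi -> eigsp pi J mu phi ->
            ip psi (pi a phi) = ip (pi (star a) psi) phi] &
      (* positive cone *)
      forall a, u1 J a ->
        (red_pos star Apos J mu a <-> op_pos_on ip (eigsp pi J mu) (pi a))].
Proof.
move=> star_invol Apos_qm _ herm_J ip_inner pi_rep _ Apos_pi decomp [eps [eps_gt0 bound]].
split=> [a|]; first exact: (Rmu_characterization _ _ _ _ _ _ _ eps_gt0 bound).
split=> [a psi|||a].
- exact: (eigsp_pi pi_rep).
- exact: (red_eq_iff_eigsp _ _ _ _ _ _ _ eps_gt0 bound).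
- split=> [z a b psi _ _ _ | a b psi _ _ _ | psi _ | a psi phi _ _ _].
  + exact: (piZD pi_rep).
  + exact: (piM pi_rep).
  + exact: (pi1 pi_rep).
  + exact: (pi_adj pi_rep).
- exact: (red_pos_iff_eigsp _ _ _ _ _ _ _ eps_gt0 bound).
Qed.
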